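(* Let $c$ be a $k$-valued function on $S$ with finite non-empty support (and not identically zero). Then there exist $X\in\mathfrak{gl}_\infty(k)$ and $Y\in\mathfrak{gl}_\infty(\mathcal U_1)$ such that $\sum_{w\in S}c(w)\,\mathrm{Tr}(w(X,Y))\neq0$.
   Context: $k$ has characteristic $0$. $\mathcal U=k[u_1,u_2,\dots]$ is the free graded-commutative algebra on countably many generators $u_i$ of homological degree $1$, and $\mathcal U_1$ its degree-$1$ part. $\mathfrak{gl}_\infty(B)=\varinjlim_n\mathbb M_n(B)$ denotes finite matrices. Consider the free graded algebra $k\langle x,y\rangle$ with $x$ of degree $0$ and $y$ of degree $1$; define $\tau(v_1\cdots v_n)=(-1)^{|v_n||v_1\cdots v_{n-1}|}v_nv_1\cdots v_{n-1}$ on words and $\mathrm N=1+\tau+\dots+\tau^{n-1}$ on words of length $n$. $S$ is a set consisting of one representative word for each cyclic word (class of words under cyclic permutation) $w$ of positive length with $\mathrm N(w)\neq0$; for $X,Y$ matrices, $w(X,Y)$ is obtained by substituting $X$ for $x$ and $Y$ for $y$. *)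

From HB Require Import structures.
From mathcomp Require Import all_boot all_order all_algebra.
Set Implicit Arguments. Unset Strict Implicit. Unset Printing Implicit Defensive.
Import GRing.Theory.
Local Open Scope ring_scope.

(* The free graded-commutative algebra U = k[u_0, u_1, ...] on countably   *)
(* many generators of degree 1 (i.e. the exterior algebra).  An element    *)
(* is encoded by its coefficient function on monomials u_{i1}...u_{ir},    *)
(* a monomial being given by a strictly increasing list [i1;...;ir] of     *)
(* naturals.  Values on non strictly increasing lists are irrelevant       *)
(* (the operations below never produce non-zero values there).             *)
Definition Uel (k : fieldType) := seq nat -> k.

Definition Uzero (k : fieldType) : Uel k := fun _ => 0.
Definition Uone (k : fieldType) : Uel k := fun C => (C == [::])%:R.
Definition Uscal (k : fieldType) (a : k) : Uel k := fun C => if C == [::] then a else 0.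
Definition Uadd (k : fieldType) (f g : Uel k) : Uel k := fun C => f C + g C.

(* sign of u_A u_B = +- u_C when C = A |_| B, with A selected by the mask m:
   (-1)^(number of pairs i < j with C_i in B and C_j in A) *)
Definition mask_sign (k : fieldType) (r : nat) (m : r.-tuple bool) : k :=
  (-1) ^+ (\sum_(i < r) \sum_(j < r) ((i < j)%N && ~~ tnth m i && tnth m j)).

Definition Umul (k : fieldType) (f g : Uel k) : Uel k := fun C =>
  if sorted ltn C then
    \sum_(m : (size C).-tuple bool)
       @mask_sign k _ m * f (mask m C) * g (mask (map negb m) C)
  else 0.

(* degree-one part U_1: linear combinations of finitely many generators *)
Definition in_U1 (k : fieldType) (f : Uel k) : Prop :=
  (forall C, f C != 0 -> size C = 1%N) /\
  (exists N, forall a, (N <= a)%N -> f [:: a] = 0).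

Definition UM (k : fieldType) (n : nat) := 'I_n -> 'I_n -> Uel k.

Definition UMmul (k : fieldType) (n : nat) (A B : UM k n) : UM k n :=
  fun i j C => \sum_(l < n) Umul (A i l) (B l j) C.

Definition UMone (k : fieldType) (n : nat) : UM k n :=
  fun i j => if i == j then @Uone k else @Uzero k.

Definition UMofk (k : fieldType) (n : nat) (X : 'M[k]_n) : UM k n :=
  fun i j => Uscal (X i j).

Definition UMtr (k : fieldType) (n : nat) (A : UM k n) : Uel k :=
  fun C => \sum_(i < n) A i i C.

(* words in k<x,y>: false = x (degree 0), true = y (degree 1) *)
Definition word := seq bool.

Definition weval (k : fieldType) (n : nat) (X : 'M[k]_n) (Y : UM k n)
    (w : word) : UM k n :=
  foldr (fun (a : bool) M => UMmul (if a then Y else UMofk X) M) (@UMone k n) w.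

(* tau acting on a signed word (s * w):
   tau(v1...vn) = (-1)^(|vn| |v1...v(n-1)|) vn v1 ... v(n-1) *)
Definition tau_sw (k : fieldType) (sw : k * word) : k * word :=
  let: (s, w) := sw in
  match lastP w with
  | LastNil => (s, w)
  | LastRcons p a => (s * (-1) ^+ (a * count id p), a :: p)
  end.

(* coefficient of the word v in N(w) = (1 + tau + ... + tau^(n-1)) w *)
Definition Ncoef (k : fieldType) (w v : word) : k :=
  \sum_(j < size w)
     let sw := iter j (@tau_sw k) (1, w) in
     if sw.2 == v then sw.1 else 0.

Definition N_nonzero (k : fieldType) (w : word) : Prop :=
  exists v, @Ncoef k w v != 0.

Definition cyc_equiv (w v : word) : Prop := exists j, rot j w = v.

Definition is_rep_set (k : fieldType) (S : word -> Prop) : Prop :=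
  [/\ (forall s, S s -> (0 < size s)%N /\ @N_nonzero k s),
      (forall w, (0 < size w)%N -> @N_nonzero k w -> exists s, S s /\ cyc_equiv w s)
    & (forall s1 s2, S s1 -> S s2 -> cyc_equiv s1 s2 -> s1 = s2)].

From HB Require Import structures.
From mathcomp Require Import all_boot all_order all_algebra zify ring.
Set Implicit Arguments. Unset Strict Implicit. Unset Printing Implicit Defensive.
Import GRing.Theory.
Local Open Scope ring_scope.

(* Nonvanishing of trace functions of cyclic words (k of characteristic 0 is
   not needed; the argument works over any field).

   Let w be a word of maximal length among those with c(w) <> 0, and let v be
   a word occurring in N(w) (it exists since N(w) <> 0).  Take the cyclic
   quiver with m = |v| vertices and one arrow i -> i+1 (mod m) labelled by the
   i-th letter of v; X is its adjacency matrix for the x-arrows and Y the one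
   for the y-arrows, the y-arrow out of i being weighted by the generator u_i.
   Then Tr(u(X,Y)) is a sum over closed paths reading u, and the coefficient
   of the monomial u_C, C the set of y-positions of v, is
   - 0 if 0 < |u| < m (a closed path of length |u| is too short),
   - the coefficient of v in N(u) if |u| = m (a closed path of length m reads
     a rotation of v, and sorting its generators gives the Koszul sign).
   Hence only w contributes to the combination, since a word u <> w of the
   same length with v in N(u) would be cyclically equivalent to w. *)

Lemma mask_filter_index (T : eqType) (s : seq T) (m : bitseq) : uniq s ->
  mask m s = [seq x <- s | nth false m (index x s)].
Proof.
move=> Us; rewrite {1}(mask_filter m Us); apply: eq_in_filter => x xs.
by rewrite in_mask // xs.
Qed.

(* On a duplicate-free sequence, a full-length mask is determined by the
   subsequence it selects; this makes the product of U a sum with at most one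
   term when one factor is a single monomial. *)
Lemma mask_inj_uniq (T : eqType) (s : seq T) (m1 m2 : bitseq) :
  uniq s -> size m1 = size s -> size m2 = size s ->
  mask m1 s = mask m2 s -> m1 = m2.
Proof.
move=> Us sm1 sm2 E; apply: (@eq_from_nth _ false); first by rewrite sm1 sm2.
move=> i; rewrite sm1 => lti; have x0 : T by case: s lti {Us sm1 sm2 E}.
have selE m : nth false m i = (nth x0 s i \in mask m s).
  by rewrite in_mask // mem_nth //= index_uniq.
by rewrite !selE E.
Qed.

Definition index_mask (T : eqType) (s : seq T) (a : T) : (size s).-tuple bool :=
  Tuple (introT eqP (size_mkseq (fun i => i == index a s) (size s))).

Lemma index_mask_nth (T : eqType) (s : seq T) (a x : T) : a \in s -> x \in s ->
  nth false (index_mask s a) (index x s) = (x == a).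
Proof.
move=> As xs; rewrite nth_mkseq ?index_mem //.
by apply/eqP/eqP => [E|->//]; rewrite -(nth_index x xs) E nth_index.
Qed.

Lemma mask_index_mask (T : eqType) (s : seq T) (a : T) : uniq s -> a \in s ->
  mask (index_mask s a) s = [:: a].
Proof.
move=> Us As; rewrite mask_filter_index // -(filter_pred1_uniq Us As).
by apply: eq_in_filter => x xs; rewrite index_mask_nth.
Qed.

Lemma mask_index_maskC (T : eqType) (s : seq T) (a : T) : uniq s -> a \in s ->
  mask (map negb (index_mask s a)) s = rem a s.
Proof.
move=> Us As; rewrite mask_filter_index // rem_filter //.
apply: eq_in_filter => x xs; rewrite (nth_map false) ?index_mask_nth //.
by rewrite size_tuple index_mem.
Qed.

Lemma sum_ord_ltn (n j : nat) : (\sum_(i < n) (i < j)%N)%N = minn n j.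
Proof.
elim: n => [|n IH]; first by rewrite big_ord0 min0n.
rewrite big_ord_recr /= IH; case: (ltnP n j) => h /=; lia.
Qed.

Section ExteriorAlgebra.
Variable k : fieldType.

Definition Ugen (a : nat) : Uel k := fun C => (C == [:: a])%:R.

Lemma sorted_ltn_uniq (C : seq nat) : sorted ltn C -> uniq C.
Proof. by apply: sorted_uniq; [exact: ltn_trans | exact: ltnn]. Qed.

Lemma Umul_zero_l (f g : Uel k) C : (forall D, f D = 0) -> Umul f g C = 0.
Proof.
move=> f0; rewrite /Umul; case: ifP => // _; rewrite big1 // => m _.
by rewrite f0 mulr0 mul0r.
Qed.

Lemma Umul_single_mask (f g : Uel k) C (m0 : (size C).-tuple bool) :
  sorted ltn C -> (forall m : bitseq, f (mask m C) != 0 -> mask m C = mask m0 C) ->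
  Umul f g C = @mask_sign k _ m0 * f (mask m0 C) * g (mask (map negb m0) C).
Proof.
move=> sC supp_f; rewrite /Umul sC (bigD1 m0) //= big1 ?addr0 // => m m_neq.
case: (eqVneq (f (mask m C)) 0) => [->|/supp_f E]; first by rewrite mulr0 mul0r.
case/eqP: m_neq; apply/val_inj/(mask_inj_uniq (sorted_ltn_uniq sC)) => //.
all: exact: size_tuple.

Qed.

Lemma mask_sign_false n : @mask_sign k _ (nseq_tuple n false) = 1.
Proof.
rewrite /mask_sign big1 ?expr0 // => i _; rewrite big1 // => j _.
by rewrite !tnth_nseq andbF.
Qed.

Lemma mask_sign_index (C : seq nat) (a : nat) : a \in C ->
  @mask_sign k _ (index_mask C a) = (-1) ^+ index a C.
Proof.
move=> aC; have ilt : (index a C < size C)%N by rewrite index_mem.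
have selE (i : 'I_(size C)) : tnth (index_mask C a) i = (val i == index a C).
  by rewrite (tnth_nth false) nth_mkseq.
rewrite /mask_sign; congr (_ ^+ _).
rewrite -[RHS](minn_idPr (ltnW ilt)) -sum_ord_ltn; apply: eq_bigr => i _.
rewrite (bigD1 (Ordinal ilt)) //= big1 ?addn0 => [|j /negbTE jn].
  by rewrite !selE eqxx andbT; case: ltngtP.
by move: jn; rewrite -val_eqE /= !selE => ->; rewrite andbF.
Qed.

Lemma Umul_scal (a : k) (g : Uel k) C :
  Umul (Uscal a) g C = if sorted ltn C then a * g C else 0.
Proof.
case: ifP => [sC|sC]; last by rewrite /Umul sC.
rewrite (@Umul_single_mask _ _ _ (nseq_tuple (size C) false)) //.
  by rewrite mask_sign_false mul1r /= mask_false map_nseq mask_true.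
by move=> m; rewrite /Uscal /= mask_false; case: ifP => [/eqP|_]; rewrite ?eqxx.
Qed.

(* Left multiplication by u_a: u_a g is supported on monomials containing a,
   with the sign of moving u_a to its sorted position. *)
Lemma Umul_gen (a : nat) (g : Uel k) C :
  Umul (Ugen a) g C =
  if sorted ltn C && (a \in C) then (-1) ^+ index a C * g (rem a C) else 0.
Proof.
case sC: (sorted ltn C); last by rewrite /Umul sC.
have Us := sorted_ltn_uniq sC.
case aC: (a \in C) => /=; last first.
  rewrite /Umul sC big1 // => m _; rewrite /Ugen; case: eqP; last by rewrite mulr0 mul0r.
  by move=> E; have := @mem_mask _ a m C; rewrite E inE eqxx aC => /(_ isT).
rewrite (@Umul_single_mask _ _ _ (index_mask C a)) //.
  by rewrite mask_sign_index // mask_index_mask // mask_index_maskC // /Ugen eqxx mulr1.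
move=> m; rewrite /Ugen mask_index_mask //.
by case: (mask m C =P [:: a]) => // _; rewrite mulr0n eqxx.
Qed.

End ExteriorAlgebra.

Section CyclicOperator.
Variable k : fieldType.

Lemma tau_rcons (s : k) (p : word) (a : bool) :
  tau_sw (s, rcons p a) = (s * (-1) ^+ (a * count id p), a :: p).
Proof.
rewrite /tau_sw; move E: (rcons p a) => w; case: lastP E => [|p' a'] E.
  by case: p E.
by case/rcons_inj: E => -> ->.
Qed.

(* Parity bookkeeping for moving one more letter from the end to the front. *)
Lemma sign_rotate (x y a : nat) :
  (-1) ^+ ((x + a) * y) * (-1) ^+ (a * (y + x)) = (-1) ^+ (x * (a + y)) :> k.
Proof.
have E : ((x + a) * y + a * (y + x) = x * (a + y) + (a * y) * 2)%N by ring.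
by rewrite -exprD E exprD (exprM _ (a * y)%N 2) sqrr_sign mulr1.
Qed.

(* tau^j w is the rotation rotr j w, with the Koszul sign of exchanging the
   last j letters with the first (size w - j) ones. *)
Lemma iter_tau (w : word) j : (j <= size w)%N ->
  iter j (@tau_sw k) (1, w) =
  ((-1) ^+ (count id (take (size w - j) w) * count id (drop (size w - j) w)),
   rotr j w).
Proof.
elim: j => [|j IH] hj.
  by rewrite /= subn0 drop_size /= muln0 expr0 /rotr subn0 rot_size.
rewrite iterS IH ?(ltnW hj) //.
set n := (size w - j.+1)%N.
have hn : (size w - j = n.+1)%N by rewrite /n; lia.
have nlt : (n < size w)%N by rewrite /n; lia.
rewrite hn (take_nth false nlt).
have -> : rotr j w = rcons (drop n.+1 w ++ take n w) (nth false w n).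
  by rewrite /rotr hn /rot (take_nth false nlt) rcons_cat.
rewrite tau_rcons /rotr -/n /rot (drop_nth false nlt) -cats1 !count_cat /=.
by rewrite addn0 sign_rotate.
Qed.

Lemma Ncoef_rot (w v : word) : Ncoef k w v != 0 -> exists j, w = rot j v.
Proof.
move=> /eqP Nnz.
case: (boolP [exists j : 'I_(size w), rotr j w == v]) => [/existsP[j /eqP Ev]|].
  by exists j; rewrite -Ev rotrK.
move=> /existsPn no_rot; case: Nnz; rewrite /Ncoef big1 // => j _.
by rewrite iter_tau /= ?(ltnW (ltn_ord j)) // (negbTE (no_rot j)).
Qed.

End CyclicOperator.

Lemma rotr_eq_rot (T : eqType) (u v : seq T) n : (rotr n u == v) = (u == rot n v).
Proof. by apply/eqP/eqP => [<-|->]; rewrite ?rotrK ?rotK. Qed.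

Lemma rot_cyc_equiv (v : word) i j : cyc_equiv (rot i v) (rot j v).
Proof.
exists (rot_add (rot i v) (size (rot i v) - i) j).
by rewrite -rot_rot_add -/(rotr i _) rotK.
Qed.

(* Number of inversions of a sequence of naturals; (-1)^inv s is the sign of
   the product of the generators u_i, i in s, against its sorted version. *)
Fixpoint inv (s : seq nat) : nat :=
  if s is x :: s' then (count (fun y => y < x) s' + inv s')%N else 0%N.

Lemma count_lt_head (x : nat) (s : seq nat) :
  sorted ltn (x :: s) -> count (fun y => y < x)%N s = 0%N.
Proof.
move/(order_path_min ltn_trans)/allP => gtx.
apply/eqP; rewrite -leqn0 leqNgt -has_count; apply/hasPn => y /gtx /= xy.
by rewrite -leqNgt ltnW.
Qed.

Lemma index_count (C : seq nat) a : sorted ltn C -> a \in C ->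
  index a C = count (fun y => y < a)%N C.
Proof.
elim: C => [//|x C IH] sC /predU1P[->|aC] /=.
  by rewrite eqxx ltnn count_lt_head.
have xa : (x < a)%N by move/(order_path_min ltn_trans)/allP: sC => /(_ a aC).
by rewrite xa (ltn_eqF xa) IH ?(path_sorted sC).
Qed.

Lemma inv_cat (s1 s2 : seq nat) : sorted ltn s1 ->
  (forall x y, x \in s1 -> y \in s2 -> y < x)%N ->
  inv (s1 ++ s2) = (size s1 * size s2 + inv s2)%N.
Proof.
elim: s1 => [//|x s1 IH] /= sC gt12.
rewrite IH ?(path_sorted sC) //; last first.
  by move=> a b a1 b2; apply: gt12; rewrite // inE a1 orbT.
rewrite count_cat count_lt_head //.
have -> : count (fun y => y < x)%N s2 = size s2.
  apply/eqP; rewrite -all_count; apply/allP => y ys.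
  by apply: gt12 => //; exact: mem_head.
lia.
Qed.

Lemma inv_sorted (s : seq nat) : sorted ltn s -> inv s = 0%N.
Proof. by move=> ss; rewrite -[s]cats0 inv_cat //= muln0. Qed.

Lemma map_nth_rot (T : Type) (x0 : T) (s : seq T) a : (a < size s)%N ->
  [seq nth x0 s ((a + t) %% size s) | t <- iota 0 (size s)] = rot a s.
Proof.
move=> ha; apply: (@eq_from_nth _ x0); first by rewrite size_map size_iota size_rot.
move=> i; rewrite size_map size_iota => hi.
rewrite (nth_map 0%N) ?size_iota // nth_iota // add0n /rot nth_cat size_drop.
case: ltnP => h; first by rewrite nth_drop modn_small //; lia.
rewrite nth_take; last by lia.
have -> : (a + i = (i - (size s - a)) + size s)%N by lia.
by rewrite modnDr modn_small //; lia.
Qed.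

Lemma count_drop_positions (s : seq bool) n :
  count id (drop n s) = count (nth false s) (drop n (iota 0 (size s))).
Proof. by rewrite -{1}(mkseq_nth false s) /mkseq -map_drop count_map. Qed.

Lemma count_take_positions (s : seq bool) n :
  count id (take n s) = count (nth false s) (take n (iota 0 (size s))).
Proof. by rewrite -{1}(mkseq_nth false s) /mkseq -map_take count_map. Qed.

(* The cyclic quiver attached to a word v of length m > 0: vertices 'I_m and
   one arrow i -> i+1 (mod m) labelled by the i-th letter of v.  X and Y are
   its adjacency matrices, the y-arrow out of i being weighted by u_i. *)
Section CycleMatrices.
Variable k : fieldType.
Variable v : word.
Local Notation m := (size v).
Hypothesis m_gt0 : (0 < m)%N.
Local Open Scope nat_scope.

Definition label (i : nat) : bool := nth false v (i %% m).
Definition succ (a : 'I_m) : 'I_m := Ordinal (ltn_pmod a.+1 m_gt0).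

Definition Xcyc : 'M[k]_m :=
  \matrix_(i, j) (if (j == succ i) && ~~ label i then 1%R else 0%R).
Definition Ycyc : UM k m :=
  fun i j => if (j == succ i) && label i then Ugen k i else @Uzero k.
Definition letter (x : bool) : UM k m := if x then Ycyc else UMofk Xcyc.

Fixpoint reads (u : word) (a : nat) : bool :=
  if u is x :: u' then (x == label a) && reads u' a.+1 else true.

Fixpoint ygens (a L : nat) : seq nat :=
  if L is L'.+1 then (if label a then [:: a %% m] else [::]) ++ ygens a.+1 L'
  else [::].

(* Closed form of the entry (a, b) of u(X, Y) at the monomial C: it is nonzero
   only along the path reading u from a to b, and then C must be the sorted
   set of generators met, the sign being that of sorting them. *)
Definition path_coef (u : word) (a : nat) (b : 'I_m) (C : seq nat) : k :=
  if [&& val b == (a + size u) %% m, reads u a, sorted ltn C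
       & perm_eq C (ygens a (size u))]
  then ((-1) ^+ inv (ygens a (size u)))%R else 0%R.

Lemma label_mod a a' : a %% m = a' %% m -> label a = label a'.
Proof. by rewrite /label => ->. Qed.

Lemma succ_mod a a' : a %% m = a' %% m -> a.+1 %% m = a'.+1 %% m.
Proof. by move=> E; rewrite -addn1 -modnDml E modnDml addn1. Qed.

Lemma reads_mod u a a' : a %% m = a' %% m -> reads u a = reads u a'.
Proof.
elim: u a a' => [//|x u IH] a a' /= E.
by rewrite (label_mod E) (IH a.+1 a'.+1 (succ_mod E)).
Qed.

Lemma ygens_mod L a a' : a %% m = a' %% m -> ygens a L = ygens a' L.
Proof.
elim: L a a' => [//|L IH] a a' /= E.
by rewrite (label_mod E) E (IH a.+1 a'.+1 (succ_mod E)).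
Qed.

Lemma path_coef_succ u (a : 'I_m) : path_coef u (succ a) =2 path_coef u a.+1.
Proof.
have E : succ a %% m = a.+1 %% m by rewrite modn_mod.
move=> b C; rewrite /path_coef (reads_mod _ E) (ygens_mod _ E).
by rewrite -modnDml E modnDml.
Qed.

Lemma UMmul_letter x (M : UM k m) (a b : 'I_m) C :
  UMmul (letter x) M a b C = Umul (letter x a (succ a)) (M (succ a) b) C.
Proof.
rewrite /UMmul (bigD1 (succ a)) //= big1 ?addr0 // => l /negbTE ne.
apply: Umul_zero_l => D; case: x; rewrite /letter /Ycyc /UMofk /Xcyc ?mxE ne //=.
by rewrite /Uscal; case: ifP.
Qed.

Lemma path_coef_cons_y u (a : 'I_m) b (g : Uel k) C : label a ->
  (forall D, g D = path_coef u a.+1 b D) ->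
  Umul (Ugen k a) g C = path_coef (true :: u) a b C.
Proof.
move=> La gE; rewrite Umul_gen gE /path_coef /= La eqxx (modn_small (ltn_ord a)).
rewrite addnS -addSn /=.
set E := ygens a.+1 (size u).
case sC: (sorted ltn C); last by rewrite /= !andbF.
have sCa : sorted ltn (rem (a : nat) C).
  by apply: subseq_sorted (rem_subseq _ C) sC; exact: ltn_trans.
case aC: ((a : nat) \in C); last first.
  rewrite /=; case: ifP => // /and3P[_ _ P].
  by move: aC; rewrite (perm_mem P) mem_head.
have permE : perm_eq C ((a : nat) :: E) = perm_eq (rem (a : nat) C) E.
  by rewrite (permPl (perm_to_rem aC)) perm_cons.
rewrite permE sCa /=; case: ifP => [/and3P[_ _ P]|_]; last by rewrite mulr0.
have /permP sortC : perm_eq C ((a : nat) :: E) by rewrite permE.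
by rewrite exprD (index_count sC aC) sortC /= ltnn.
Qed.

Lemma path_coef_cons_x u (a : 'I_m) b (g : Uel k) C : ~~ label a ->
  (forall D, g D = path_coef u a.+1 b D) ->
  Umul (Uscal 1) g C = path_coef (false :: u) a b C.
Proof.
move=> /negbTE La gE; rewrite Umul_scal gE /path_coef /= La addnS -addSn.
by case: (sorted ltn C); rewrite ?mul1r ?andbF.
Qed.

Lemma Umul_letter_path x u (a : 'I_m) b (g : Uel k) C :
  (forall D, g D = path_coef u a.+1 b D) ->
  Umul (letter x a (succ a)) g C = path_coef (x :: u) a b C.
Proof.
case: x; case La: (label a) => gE; rewrite /letter /Ycyc /UMofk /Xcyc ?mxE eqxx ?La /=.
- exact: path_coef_cons_y.
- by rewrite Umul_zero_l // /path_coef /= La andbF.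
- by rewrite Umul_zero_l /path_coef /= ?La ?andbF // => D; rewrite /Uscal; case: ifP.
- exact: (path_coef_cons_x C (negbT La) gE).
Qed.

Lemma weval_path_coef u (a b : 'I_m) C : weval Xcyc Ycyc u a b C = path_coef u a b C.
Proof.
elim: u a b C => [|x u IH] a b C.
  rewrite /= /UMone /path_coef /= addn0 modn_small // /Uone.
  case: (eqVneq a b) => [->|ne]; last by rewrite val_eqE eq_sym (negbTE ne).
  case: C => [|y C]; first by rewrite eqxx /= expr0.
  by rewrite eqxx /=; case: ifP => // /andP[_ /perm_size].
have -> : weval Xcyc Ycyc (x :: u) = UMmul (letter x) (weval Xcyc Ycyc u) by [].
rewrite UMmul_letter.
by apply: Umul_letter_path => D; rewrite IH path_coef_succ.
Qed.

(* The monomial u_C, C the set of positions of the letters y of v: the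
   product of the weights along one full turn of the cycle. *)
Definition ymonomial : seq nat := [seq i <- iota 0 m | nth false v i].

Lemma reads_map u a : reads u a = (u == [seq label (a + t) | t <- iota 0 (size u)]).
Proof.
elim: u a => [//|x u IH] a /=; rewrite eqseq_cons IH addn0; congr (_ && (_ == _)).
by rewrite (iotaDl 1 0) -map_comp; apply: eq_map => t /=; rewrite add1n addSnnS.
Qed.

Lemma ygens_filter a L :
  ygens a L = [seq x <- [seq (a + t) %% m | t <- iota 0 L] | nth false v x].
Proof.
elim: L a => [//|L IH] a /=; rewrite IH addn0 /label.
rewrite (iotaDl 1 0) -map_comp (@eq_map _ _ _ (fun t => (a.+1 + t) %% m)).
  by case: (nth false v (a %% m)).
by move=> t /=; rewrite add1n addSnnS.
Qed.

Lemma ygens_turn (a : 'I_m) : ygens a m = [seq x <- rot a (iota 0 m) | nth false v x].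
Proof.
rewrite ygens_filter; congr filter.
have := map_nth_rot 0 (s := iota 0 m) (a := a); rewrite size_iota => <- //.
by apply: eq_map => t; rewrite nth_iota ?ltn_pmod.
Qed.

Lemma reads_turn u (a : 'I_m) : size u = m -> reads u a = (u == rot a v).
Proof.
move=> su; rewrite reads_map su; congr (_ == _).
by rewrite -(map_nth_rot false) //; apply: eq_map.
Qed.

(* Sorting the generators of a full turn from a costs the Koszul sign of
   rotating v by a. *)
Lemma inv_ygens_turn (a : 'I_m) :
  inv (ygens a m) = count id (drop a v) * count id (take a v).
Proof.
rewrite ygens_turn /rot filter_cat inv_cat.
- rewrite inv_sorted; last first.
    by apply: (sorted_filter ltn_trans); rewrite take_iota; exact: iota_ltn_sorted.
  rewrite addn0 !size_filter count_drop_positions count_take_positions.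
  by rewrite drop_iota take_iota.
- by apply: (sorted_filter ltn_trans); rewrite drop_iota; exact: iota_ltn_sorted.
- move=> x y; rewrite !mem_filter drop_iota take_iota !mem_iota !add0n.
  by move=> /andP[_ /andP[hx _]] /andP[_ /andP[_ hy]]; have := ltn_ord a; lia.
Qed.

Lemma perm_ymonomial (a : 'I_m) : perm_eq ymonomial (ygens a m).
Proof.
by rewrite ygens_turn /ymonomial perm_sym; apply: perm_filter; rewrite perm_rot.
Qed.

Lemma sorted_ymonomial : sorted ltn ymonomial.
Proof. by apply: sorted_filter; [exact: ltn_trans | exact: iota_ltn_sorted]. Qed.

(* Words shorter than v give closed paths too short to meet all generators. *)
Lemma trace_short u : 0 < size u < m -> UMtr (weval Xcyc Ycyc u) ymonomial = 0%R.
Proof.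
move=> /andP[u_gt0 u_lt]; rewrite /UMtr big1 // => a _.
rewrite weval_path_coef /path_coef; case: eqP => //= E.
have : a + size u == a + 0 %[mod m] by rewrite addn0 -E modn_small.
by rewrite eqn_modDl mod0n modn_small //; lia.
Qed.

Lemma trace_full_length u : size u = m ->
  UMtr (weval Xcyc Ycyc u) ymonomial = Ncoef k u v.
Proof.
move=> su; rewrite /UMtr /Ncoef su; apply: eq_bigr => a _.
rewrite weval_path_coef /path_coef su reads_turn // sorted_ymonomial perm_ymonomial.
rewrite modnDr modn_small // eqxx andbT inv_ygens_turn.
rewrite iter_tau /= ?su ?(ltnW (ltn_ord a)) //.
rewrite rotr_eq_rot; case: eqP => // ->.
by rewrite /= -size_drop /rot take_size_cat // drop_size_cat // mulnC.
Qed.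

Lemma Ycyc_in_U1 i j : in_U1 (Ycyc i j).
Proof.
rewrite /Ycyc; case: ifP => _; last by split => [C|]; [rewrite eqxx | exists 0].
split=> [C|]; first by rewrite /Ugen; case: (C =P [:: val i]) => [->|_]; rewrite ?eqxx.
by exists i.+1 => b ib; rewrite /Ugen; case: eqP => // -[E]; move: ib; rewrite E ltnn.
Qed.

End CycleMatrices.

Lemma exists_longest (T : eqType) (P : pred (seq T)) (supp : seq (seq T)) :
  (exists w, P w) -> (forall w, P w -> w \in supp) ->
  exists2 w, P w & forall u, P u -> (size u <= size w)%N.
Proof.
move=> [w0 Pw0] Psupp.
pose has_len n := has (fun w => P w && (size w == n)) supp.
have ex_len : exists n, has_len n.
  by exists (size w0); apply/hasP; exists w0; [exact: Psupp | rewrite Pw0 eqxx].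
have bound_len n : has_len n -> (n <= \max_(w <- supp) size w)%N.
  by move=> /hasP[w ws /andP[_ /eqP <-]]; exact: leq_bigmax_seq.
case: (ex_maxnP ex_len bound_len) => n /hasP[w _ /andP[Pw /eqP <-]] n_max.
exists w => // u Pu; apply: n_max; apply/hasP.
by exists u; [exact: Psupp | rewrite Pu eqxx].
Qed.

Lemma trace_combination (k : fieldType) (S : word -> Prop) (HS : is_rep_set k S)
    (c : word -> k) (supp : seq word) (w v : word) (m_gt0 : (0 < size v)%N) :
  (forall u, c u != 0 -> S u) -> uniq supp -> w \in supp ->
  (forall u, c u != 0 -> (size u <= size w)%N) -> S w ->
  size v = size w -> Ncoef k w v != 0 ->
  \sum_(u <- supp) c u * UMtr (weval (Xcyc k m_gt0) (Ycyc k m_gt0) u) (ymonomial v)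
  = c w * Ncoef k w v.
Proof.
have [HS_pos _ HS_uniq] := HS.
move=> c_dom supp_uniq w_supp w_max Sw sv Nwv.
rewrite (bigD1_seq w) //= trace_full_length // big_seq_cond big1 ?addr0 //.
move=> u /andP[_ uw]; case: (eqVneq (c u) 0) => [->|cu]; first by rewrite mul0r.
have [u_gt0 _] := HS_pos u (c_dom u cu).
case: (ltngtP (size u) (size w)) => [lt_uw|gt_uw|eq_uw].
- by rewrite trace_short ?mulr0 // u_gt0 sv.
- by have := w_max u cu; rewrite leqNgt gt_uw.
rewrite trace_full_length ?sv //.
case: (eqVneq (Ncoef k u v) 0) => [->|/Ncoef_rot[i ui]]; first by rewrite mulr0.
have [j wj] := Ncoef_rot Nwv.
have cyc_uw : cyc_equiv u w by rewrite ui wj; exact: rot_cyc_equiv.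
by move: uw; rewrite (HS_uniq u w (c_dom u cu) Sw cyc_uw) eqxx.
Qed.

Theorem mainTheorem20 (k : fieldType) (Hchar : [pchar k] =i pred0)
    (S : word -> Prop) (HS : is_rep_set k S)
    (c : word -> k) (supp : seq word)
    (Hc_dom : forall w, c w != 0 -> S w)
    (Hsupp_uniq : uniq supp)
    (Hsupp : forall w, c w != 0 -> w \in supp)
    (Hnz : exists w, c w != 0) :
  exists (n : nat) (X : 'M[k]_n) (Y : UM k n),
    (forall i j, in_U1 (Y i j)) /\
    exists C : seq nat,
      \sum_(w <- supp) c w * UMtr (weval X Y w) C != 0.
Proof.
have [w cw w_max] := exists_longest (P := fun w => c w != 0) Hnz Hsupp.
have [HS_pos _ _] := HS.
have [w_gt0 [v Nwv]] := HS_pos w (Hc_dom w cw).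
have [j wj] := Ncoef_rot Nwv.
have sv : size v = size w by rewrite wj size_rot.
have m_gt0 : (0 < size v)%N by rewrite sv.
exists (size v), (Xcyc k m_gt0), (Ycyc k m_gt0); split; first exact: Ycyc_in_U1.
exists (ymonomial v).
rewrite (trace_combination HS m_gt0 Hc_dom Hsupp_uniq (Hsupp w cw) w_max) //.
  exact: mulf_neq0.
exact: Hc_dom.
Qed.
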